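(* Let $G$ be a graph with $n$ nodes and graph Laplacian $\mathbf{L}$. Then a matrix $\mathbf{P}\in\mathbb{R}^{n\times d}$ is node- and adjacency-identifying if there exist matrices $\mathbf{W}^Q,\mathbf{W}^K\in\mathbb{R}^{d\times d}$ such that $$\frac{1}{\sqrt{d_k}}(\mathbf{P}\mathbf{W}^Q)(\mathbf{P}\mathbf{W}^K)^T=\mathbf{L}.$$
   Context: Graphs are finite, undirected, without self-loops and without isolated nodes; $\mathbf{L}=\mathbf{D}-\mathbf{A}(G)$ with $\mathbf{D}$ the degree matrix and $\mathbf{A}(G)$ the adjacency matrix; $d_k>0$ is a fixed constant. For $\mathbf{W}^Q,\mathbf{W}^K$ put $\tilde{\mathbf{P}}=\frac{1}{\sqrt{d_k}}\mathbf{P}\mathbf{W}^Q(\mathbf{P}\mathbf{W}^K)^T$. $\mathbf{P}$ is node-identifying if for some $\mathbf{W}^Q,\mathbf{W}^K$: $\tilde{\mathbf{P}}_{ij}=\max_k\tilde{\mathbf{P}}_{ik}\iff i=j$; adjacency-identifying if for some (possibly different) $\mathbf{W}^Q,\mathbf{W}^K$: $\tilde{\mathbf{P}}_{ij}=\max_k\tilde{\mathbf{P}}_{ik}\iff\mathbf{A}(G)_{ij}=1$. *)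

From HB Require Import structures.
From mathcomp Require Import all_boot all_order all_algebra.
From mathcomp Require Import reals.
Set Implicit Arguments. Unset Strict Implicit. Unset Printing Implicit Defensive.
Import Order.TTheory GRing.Theory Num.Theory.
Local Open Scope ring_scope.

Definition simple_graph_no_isolated (n : nat) (e : rel 'I_n) : Prop :=
  [/\ symmetric e, irreflexive e & forall i : 'I_n, exists j, e i j].

Definition adjmx (R : realType) (n : nat) (e : rel 'I_n) : 'M[R]_n :=
  \matrix_(i, j) (e i j)%:R.

Definition degmx (R : realType) (n : nat) (e : rel 'I_n) : 'M[R]_n :=
  \matrix_(i, j) (if i == j then (#|[set k | e i k]|)%:R else 0).

Definition laplacian (R : realType) (n : nat) (e : rel 'I_n) : 'M[R]_n :=
  degmx R e - adjmx R e.

Definition Ptilde (R : realType) (n d : nat) (dk : R)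
  (P : 'M[R]_(n, d)) (WQ WK : 'M[R]_d) : 'M[R]_n :=
  (Num.sqrt dk)^-1 *: ((P *m WQ) *m (P *m WK)^T).

Definition is_row_max (R : realType) (n : nat) (M : 'M[R]_n) (i j : 'I_n) : Prop :=
  forall k : 'I_n, M i k <= M i j.

Definition node_identifying (R : realType) (n d : nat) (dk : R)
  (P : 'M[R]_(n, d)) : Prop :=
  exists WQ WK : 'M[R]_d, forall i j : 'I_n,
    is_row_max (Ptilde dk P WQ WK) i j <-> i = j.

Definition adjacency_identifying (R : realType) (n d : nat) (dk : R)
  (e : rel 'I_n) (P : 'M[R]_(n, d)) : Prop :=
  exists WQ WK : 'M[R]_d, forall i j : 'I_n,
    is_row_max (Ptilde dk P WQ WK) i j <-> adjmx R e i j = 1.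

From HB Require Import structures.
From mathcomp Require Import all_boot all_order all_algebra.
From mathcomp Require Import reals.
Set Implicit Arguments. Unset Strict Implicit. Unset Printing Implicit Defensive.
Import Order.TTheory GRing.Theory Num.Theory.
Local Open Scope ring_scope.

(* Row i of L has the degree of i (at least 1) on the diagonal and the values
   -1 or 0 elsewhere, so its maxima sit exactly on the diagonal; row i of -L
   has -deg i < 1 on the diagonal and the indicator of the neighbours of i
   elsewhere, so its maxima (value 1) are exactly the neighbours of i. Since
   flipping the sign of W^Q flips the sign of the attention scores, the same P
   is node- and adjacency-identifying. *)

Lemma Ptilde_oppl (R : realType) (n d : nat) (dk : R) (P : 'M[R]_(n, d))
    (WQ WK : 'M[R]_d) :
  Ptilde dk P (- WQ) WK = - Ptilde dk P WQ WK.
Proof. by rewrite /Ptilde mulmxN mulNmx scalerN. Qed.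

Lemma is_row_max_level (R : realType) (n : nat) (M : 'M[R]_n) (i : 'I_n)
    (S : pred 'I_n) (c : R) :
  (exists j, S j) -> (forall j, S j -> M i j = c) ->
  (forall j, ~~ S j -> M i j < c) ->
  forall j, is_row_max M i j <-> S j.
Proof.
move=> [j0 Sj0] Mc Mlt j; split=> [maxj | Sj k].
  by apply/negPn/negP => /Mlt; rewrite ltNge -(Mc _ Sj0) maxj.
rewrite (Mc _ Sj); have [/Mc -> // | /Mlt /ltW //] := boolP (S k).
Qed.

Lemma adjmx_eq1 (R : realType) (n : nat) (e : rel 'I_n) (i j : 'I_n) :
  adjmx R e i j = 1 <-> e i j.
Proof.
by rewrite mxE; case: (e i j); split=> // /eqP; rewrite eq_sym oner_eq0.
Qed.

Section Laplacian.

Variables (R : realType) (n : nat) (e : rel 'I_n).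
Hypothesis e_irr : irreflexive e.

Local Notation deg i := (#|[set k | e i k]|)%:R.

Lemma laplacian_diag (i : 'I_n) : laplacian R e i i = deg i.
Proof. by rewrite !mxE eqxx e_irr subr0. Qed.

Lemma laplacian_offdiag (i j : 'I_n) :
  i != j -> laplacian R e i j = - (e i j)%:R.
Proof. by move=> /negbTE ij; rewrite !mxE ij sub0r. Qed.

Lemma deg_gt0 (i : 'I_n) : (exists j, e i j) -> 0 < deg i :> R.
Proof.
by move=> [j eij]; rewrite ltr0n card_gt0; apply/set0Pn; exists j; rewrite inE.
Qed.

Lemma neighbour_neq (i j : 'I_n) : e i j -> i != j.
Proof. by apply: contraTneq => ->; rewrite e_irr. Qed.

Lemma laplacian_row_maxP (i : 'I_n) : (exists j, e i j) ->
  forall j, is_row_max (laplacian R e) i j <-> i = j.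
Proof.
move=> i_nb j; rewrite (rwP eqP).
apply: (is_row_max_level (S := [pred k | i == k]) (c := deg i)).
- by exists i; rewrite inE.
- by move=> k /eqP <-; exact: laplacian_diag.
move=> k ik; rewrite laplacian_offdiag //.
by apply: le_lt_trans (deg_gt0 i_nb); rewrite oppr_le0 ler0n.
Qed.

Lemma opp_laplacian_row_maxP (i : 'I_n) : (exists j, e i j) ->
  forall j, is_row_max (- laplacian R e) i j <-> e i j.
Proof.
move=> i_nb; apply: (is_row_max_level (c := 1)) => // k eik.
  by rewrite mxE laplacian_offdiag ?neighbour_neq // eik opprK.
have [<- | ik] := eqVneq i k.
  by rewrite mxE laplacian_diag (le_lt_trans _ ltr01) // oppr_le0 ler0n.
by rewrite mxE laplacian_offdiag // (negbTE eik) opprK ltr01.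
Qed.

End Laplacian.

Theorem lemmaF6 (R : realType) (n d : nat) (dk : R) (hdk : 0 < dk)
  (e : rel 'I_n) (hG : simple_graph_no_isolated e) (P : 'M[R]_(n, d)) :
  (exists WQ WK : 'M[R]_d, Ptilde dk P WQ WK = laplacian R e) ->
  node_identifying dk P /\ adjacency_identifying dk e P.
Proof.
case=> WQ [WK PL]; case: hG => _ e_irr e_nb; split.
  by exists WQ, WK => i j; rewrite PL; exact: laplacian_row_maxP.
exists (- WQ), WK => i j; rewrite Ptilde_oppl PL adjmx_eq1.
exact: opp_laplacian_row_maxP.
Qed.
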